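(* There exists a team $R$ of three robots such that the Equivalent Oscillation problem $EqOsc$ is not solvable by $R$ in the model $\mathcal{LUMI}$ under the semi-synchronous scheduler with full visibility, i.e. $EqOsc\notin Task(\mathcal{LUMI}, SSYNCH, \mathcal{F.V.}; R)$.
   Context: Robots are anonymous, identical, autonomous points in the Euclidean plane. Each has its own local coordinate system, with no common chirality. Robots operate in Look-Compute-Move cycles: an instantaneous snapshot of robot positions and lights, a computation of a destination and light color, then a move. In $\mathcal{LUMI}$, each robot has a persistent light with colors from a finite set, visible to itself and to others; robots are otherwise oblivious. Under the semi-synchronous scheduler, time is divided into rounds; in each round an adversarially chosen set of robots performs one cycle synchronously, and each robot is activated infinitely often. Under full visibility, every robot sees all robots. Problem Equivalent Oscillation ($EqOsc$): three robots $r_1,r_2,r_3$ are initially at collinear points $B,A,C$ respectively, with $AB=AC=d$. Let $B',C'$ be the points on this line (on segments $AB$, $AC$) with $AB'=AC'=\frac{2d}{3}$. The robots $r_1$ and $r_3$ must always be equidistant from $r_2$ (which is at $A$) — the equidistant condition. They must also oscillate: if at some round $t$, $r_1,r_3$ are at $B,C$, then at some round $t'>t$ they are at $B',C'$; and if at round $t'$ they are at $B',C'$, then at some round $t''>t'$ they are at $B,C$ — the oscillation condition. *)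

From Stdlib Require Import Reals List Permutation.
Import ListNotations.
Open Scope R_scope.

Definition point : Type := (R * R)%type.
Definition padd (p q : point) : point := (fst p + fst q, snd p + snd q).
Definition psub (p q : point) : point := (fst p - fst q, snd p - snd q).
Definition pscale (k : R) (p : point) : point := (k * fst p, k * snd p).
Definition dist (p q : point) : R :=
  sqrt ((fst p - fst q) ^ 2 + (snd p - snd q) ^ 2).

(** A local coordinate system: origin, unit length (scale), orientation
    (angle) and handedness (mirror = opposite chirality).  No agreement on
    any of these is assumed among robots. *)
Record frame := mkFrame {
  f_origin : point;
  f_scale : R;
  f_angle : R;
  f_mirror : bool }.

Definition frame_valid (f : frame) : Prop := 0 < f_scale f.

Definition to_global (f : frame) (p : point) : point :=
  let p1 := if f_mirror f then (fst p, - snd p) else p in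
  let c := cos (f_angle f) in
  let s := sin (f_angle f) in
  padd (f_origin f)
       (f_scale f * (c * fst p1 - s * snd p1),
        f_scale f * (s * fst p1 + c * snd p1)).

Definition to_local (f : frame) (q : point) : point :=
  let v := psub q (f_origin f) in
  let x := fst v / f_scale f in
  let y := snd v / f_scale f in
  let c := cos (f_angle f) in
  let s := sin (f_angle f) in
  let p1 := (c * x + s * y, - s * x + c * y) in
  if f_mirror f then (fst p1, - snd p1) else p1.

(** The three robots: r2 is the one initially at A, r1 at B, r3 at C. *)
Inductive robot := r1 | r2 | r3.

Definition others (i : robot) : list robot :=
  match i with
  | r1 => [r2; r3]
  | r2 => [r1; r3]
  | r3 => [r1; r2]
  end.

(** A LUMI algorithm over a color set [C]: from a snapshot (own position and
    light in local coordinates, plus the positions and lights of all the other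
    robots, full visibility) compute a destination (local coordinates) and a
    new light color. *)
Definition algorithm (C : Type) : Type :=
  (point * C) -> list (point * C) -> (point * C).

Definition anonymous {C : Type} (alg : algorithm C) : Prop :=
  forall o l l', Permutation l l' -> alg o l = alg o l'.

Definition config (C : Type) : Type := robot -> (point * C).

Definition snapshot {C : Type} (F : robot -> frame) (cfg : config C) (i : robot)
  : (point * C) * list (point * C) :=
  ((to_local (F i) (fst (cfg i)), snd (cfg i)),
   map (fun j => (to_local (F i) (fst (cfg j)), snd (cfg j))) (others i)).

(** Semi-synchronous execution (rigid moves): in round [t] the robots with
    [act t i = true] perform a Look-Compute-Move cycle on the same snapshot. *)
Fixpoint exec {C : Type} (F : robot -> frame) (alg : algorithm C)
  (act : nat -> robot -> bool) (init : robot -> point) (c0 : C) (t : nat)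
  : config C :=
  match t with
  | O => fun i => (init i, c0)
  | S t' =>
      let cfg := exec F alg act init c0 t' in
      fun i =>
        if act t' i then
          let s := snapshot F cfg i in
          let res := alg (fst s) (snd s) in
          (to_global (F i) (fst res), snd res)
        else cfg i
  end.

Definition ssync_schedule (act : nat -> robot -> bool) : Prop :=
  (forall t, exists i, act t i = true) /\
  (forall i t, exists t', (t <= t')%nat /\ act t' i = true).

(** EqOsc instance: A is the position of r2, w a nonzero vector,
    B = A - w, C = A + w (so AB = AC = d = |w|, collinear, A between),
    B' = A - (2/3) w, C' = A + (2/3) w. *)
Definition ptB (A w : point) : point := psub A w.
Definition ptC (A w : point) : point := padd A w.
Definition ptB' (A w : point) : point := psub A (pscale (2/3) w).
Definition ptC' (A w : point) : point := padd A (pscale (2/3) w).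

Definition init_pos (A w : point) (i : robot) : point :=
  match i with r1 => ptB A w | r2 => A | r3 => ptC A w end.

Definition eqosc_ok (A w : point) (pos : nat -> robot -> point) : Prop :=
  (forall t, pos t r2 = A /\ dist (pos t r1) (pos t r2) = dist (pos t r3) (pos t r2)) /\
  (forall t, pos t r1 = ptB A w /\ pos t r3 = ptC A w ->
     exists t', (t < t')%nat /\ pos t' r1 = ptB' A w /\ pos t' r3 = ptC' A w) /\
  (forall t, pos t r1 = ptB' A w /\ pos t r3 = ptC' A w ->
     exists t', (t < t')%nat /\ pos t' r1 = ptB A w /\ pos t' r3 = ptC A w).

(** EqOsc \in Task(LUMI, SSYNCH, F.V.; R) for the team with local frames F:
    some finite color set, initial color and anonymous algorithm solve every
    instance under every SSYNCH schedule. *)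
Definition eqosc_solvable_LUMI_SSYNC (F : robot -> frame) : Prop :=
  exists (C : Type) (c0 : C) (alg : algorithm C),
    (exists l : list C, forall c, In c l) /\
    anonymous alg /\
    forall (A w : point), w <> (0, 0) ->
    forall act, ssync_schedule act ->
      eqosc_ok A w (fun t i => fst (exec F alg act (init_pos A w) c0 t i)).

From Pilot Require Import Defs.
From Stdlib Require Import Reals List Permutation Lra Lia.
Open Scope R_scope.

(* The scheduler activates [r2] in every round and [r1], [r3] in alternate
   rounds, so in each round at most one of [r1], [r3] moves.  Equidistance
   then keeps the moving robot on the circle around [A] on which the idle one
   sits: both stay at distance [d] from [A] forever and never reach [B'], [C']
   at distance [2d/3].  This holds whatever the algorithm and the frames. *)

Definition alternating_schedule (t : nat) (i : robot) : bool :=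
  match i with r1 => Nat.even t | r2 => true | r3 => negb (Nat.even t) end.

Lemma alternating_schedule_ssync : ssync_schedule alternating_schedule.
Proof.
  split.
  - intro t. exists r2. reflexivity.
  - intros i t. destruct i; simpl.
    + destruct (Nat.even t) eqn:E.
      * exists t. split; [lia | exact E].
      * exists (S t). split; [lia |]. rewrite Nat.even_succ, <- Nat.negb_even, E. reflexivity.
    + exists t. split; [lia | reflexivity].
    + destruct (Nat.even t) eqn:E.
      * exists (S t). split; [lia |]. rewrite Nat.even_succ, <- Nat.negb_even, E. reflexivity.
      * exists t. split; [lia |]. rewrite E. reflexivity.
Qed.

Lemma alternating_schedule_one_wing_idle (t : nat) :
  alternating_schedule t r1 = false \/ alternating_schedule t r3 = false.
Proof. simpl. destruct (Nat.even t); [right | left]; reflexivity. Qed.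

Lemma exec_idle {C : Type} F (alg : algorithm C) act init c0 t i :
  act t i = false -> exec F alg act init c0 (S t) i = exec F alg act init c0 t i.
Proof. intro H. simpl. rewrite H. reflexivity. Qed.

Lemma exec_one_wing_idle {C : Type} F (alg : algorithm C) act init c0 :
  (forall t, act t r1 = false \/ act t r3 = false) ->
  forall t,
    fst (exec F alg act init c0 (S t) r1) = fst (exec F alg act init c0 t r1) \/
    fst (exec F alg act init c0 (S t) r3) = fst (exec F alg act init c0 t r3).
Proof.
  intros Hact t.
  destruct (Hact t) as [H | H]; [left | right]; rewrite exec_idle by exact H; reflexivity.
Qed.

(* Qualified because [Reals] also exports a [dist], on metric spaces. *)
Lemma equidistant_radius_constant (A : point) (pos : nat -> robot -> point) :
  (forall t, pos t r2 = A /\ Defs.dist (pos t r1) (pos t r2) = Defs.dist (pos t r3) (pos t r2)) ->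
  (forall t, pos (S t) r1 = pos t r1 \/ pos (S t) r3 = pos t r3) ->
  forall t, Defs.dist (pos t r1) A = Defs.dist (pos 0%nat r1) A.
Proof.
  intros Heq Hidle t.
  assert (Hequi : forall s, Defs.dist (pos s r1) A = Defs.dist (pos s r3) A).
  { intro s. destruct (Heq s) as [H2 E]. rewrite H2 in E. exact E. }
  induction t as [|t IH]; [reflexivity |].
  destruct (Hidle t) as [E | E].
  - rewrite E. exact IH.
  - rewrite Hequi, E, <- Hequi. exact IH.
Qed.

Lemma dist_psub_l (A v : point) : Defs.dist (psub A v) A = sqrt (fst v ^ 2 + snd v ^ 2).
Proof. unfold Defs.dist, psub. simpl. f_equal. ring. Qed.

Lemma dist_ptB'_neq_ptB (A w : point) :
  w <> (0, 0) -> Defs.dist (ptB' A w) A <> Defs.dist (ptB A w) A.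
Proof.
  intros Hw.
  destruct w as [x y].
  unfold ptB', ptB. rewrite !dist_psub_l. simpl.
  assert (Hpos : 0 < x ^ 2 + y ^ 2).
  { destruct (Req_dec x 0) as [-> | Hx].
    - destruct (Req_dec y 0) as [-> | Hy]; [now destruct Hw |].
      pose proof (Rsqr_pos_lt y Hy). unfold Rsqr in *. nra.
    - pose proof (Rsqr_pos_lt x Hx). unfold Rsqr in *. nra. }
  intro E. apply sqrt_inj in E; nra.
Qed.

Lemma eqosc_fails_without_simultaneous_moves (A w : point) (pos : nat -> robot -> point) :
  w <> (0, 0) ->
  pos 0%nat r1 = ptB A w -> pos 0%nat r3 = ptC A w ->
  (forall t, pos (S t) r1 = pos t r1 \/ pos (S t) r3 = pos t r3) ->
  ~ eqosc_ok A w pos.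
Proof.
  intros Hw HB HC Hidle [Heq [Hosc _]].
  destruct (Hosc 0%nat (conj HB HC)) as [t [_ [HB' _]]].
  apply (dist_ptB'_neq_ptB A w Hw).
  rewrite <- HB', <- HB.
  exact (equidistant_radius_constant A pos Heq Hidle t).
Qed.

Theorem lemma3 :
  exists F : robot -> frame,
    (forall i, frame_valid (F i)) /\ ~ eqosc_solvable_LUMI_SSYNC F.
Proof.
  exists (fun _ => mkFrame (0, 0) 1 0 false). split.
  { intro i. unfold frame_valid. simpl. lra. }
  intros [C [c0 [alg [_ [_ Hsolves]]]]].
  assert (Hw : ((1, 0) : point) <> (0, 0)) by (intro E; injection E; lra).
  refine (eqosc_fails_without_simultaneous_moves (0, 0) (1, 0) _ Hw _ _ _
            (Hsolves (0, 0) (1, 0) Hw alternating_schedule alternating_schedule_ssync));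
    [reflexivity | reflexivity |].
  apply exec_one_wing_idle, alternating_schedule_one_wing_idle.
Qed.
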